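(* A pro-$p$ group $G$ is Frattini-resistant if and only if for all finitely generated subgroups $H$ and $K$ of $G$, $\Phi(H)\le\Phi(K)$ implies $H\le K$.
   Context: $p$ is a prime; subgroups are closed; $\Phi(H)$ is the Frattini subgroup. A triple $(G,K,H)$ of pro-$p$ groups with $H\le K\le G$ is hierarchical if $x\in G$, $x^p\in H$ imply $x\in K$. $G$ is Frattini-resistant if $(G,H,\Phi(H))$ is hierarchical for every finitely generated subgroup $H$ of $G$. *)

From HB Require Import structures.
From mathcomp Require Import all_boot all_order all_algebra.
From mathcomp Require Import all_classical all_reals all_analysis.

Set Implicit Arguments.
Unset Strict Implicit.
Unset Printing Implicit Defensive.

Local Open Scope classical_set_scope.

Record group_law (T : Type) := GroupLaw {
  gmul : T -> T -> T;
  ginv : T -> T;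
  gone : T;
  gmulA : forall x y z, gmul x (gmul y z) = gmul (gmul x y) z;
  gmul1 : forall x, gmul gone x = x;
  gmulV : forall x, gmul (ginv x) x = gone
}.

Section Defs.
Variables (T : topologicalType) (L : group_law T).

Local Notation "x * y" := (gmul L x y).
Local Notation "x ^-1" := (ginv L x).
Local Notation "1" := (gone L).

Fixpoint gpow (x : T) (n : nat) : T :=
  match n with 0 => 1 | n'.+1 => x * gpow x n' end.

Definition topological_group : Prop :=
  continuous (fun z : T * T => z.1 * z.2) /\ continuous (ginv L).

Definition is_subgroup (H : set T) : Prop :=
  H 1 /\ (forall x y, H x -> H y -> H (x * y)) /\ (forall x, H x -> H (x^-1)).

(* subgroup in the sense of the paper: closed subgroup *)
Definition closed_subgroup (H : set T) : Prop := is_subgroup H /\ closed H.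

Definition normal_subgroup (N : set T) : Prop :=
  is_subgroup N /\ forall x y, N y -> N (x^-1 * (y * x)).

(* the quotient T / N is finite of order m: there are m representatives
   of pairwise distinct left cosets covering T *)
Definition quotient_order (N : set T) (m : nat) : Prop :=
  exists s : seq T, size s = m /\
    (forall x, exists2 i, (i < m)%N & N ((nth 1 s i)^-1 * x)) /\
    (forall i j, (i < m)%N -> (j < m)%N -> N ((nth 1 s i)^-1 * nth 1 s j) -> i = j).

Definition pro_p_group (p : nat) : Prop :=
  [/\ topological_group, compact [set: T], hausdorff_space T,
      totally_disconnected [set: T] &
      forall N, normal_subgroup N -> open N ->
        exists n, quotient_order N (p ^ n)%N].

Definition gen_subgroup (S : set T) : set T :=
  [set x | forall H, is_subgroup H -> S `<=` H -> H x].

Definition fg_subgroup (H : set T) : Prop :=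
  closed_subgroup H /\
  exists s : seq T, H = closure (gen_subgroup [set x | x \in s]).

Definition maximal_open_subgroup (H M : set T) : Prop :=
  [/\ is_subgroup M, M `<=` H, M <> H,
      (exists U : set T, open U /\ M = U `&` H) &
      forall K, is_subgroup K -> M `<=` K -> K `<=` H -> K = M \/ K = H].

Definition Frattini (H : set T) : set T :=
  [set x | H x /\ forall M, maximal_open_subgroup H M -> M x].

(* (G, K, H) hierarchical, G being the whole group T *)
Definition hierarchical (p : nat) (K H : set T) : Prop :=
  forall x : T, H (gpow x p) -> K x.

Definition Frattini_resistant (p : nat) : Prop :=
  forall H, fg_subgroup H -> hierarchical p H (Frattini H).

End Defs.

From mathcomp Require Import all_boot all_order all_algebra.
From mathcomp Require Import all_classical all_reals all_analysis.
From mathcomp Require Import all_fingroup all_solvable.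
(* Imported last, so that Frattini is the one of Defs, not that of all_solvable. *)
From Pilot Require Import Defs.

(* Two facts about a closed subgroup H of the pro-p group G carry the proof.
   First, h^p lies in Phi(H) for every h in H: a maximal open subgroup M of H
   contains N `&` H for an open normal subgroup N of G (G is compact and totally
   disconnected), so M comes from a maximal subgroup of the finite p-group
   HN/N, and such a subgroup contains all p-th powers.  Second, for the
   procyclic group C = closure <x>, either closure <x^p> = C or closure <x^p>
   is a maximal open subgroup of index p of C; in both cases
   Phi(C) <= closure <x^p>.
   Now if Phi(H) <= Phi(K), then h^p is in Phi(K) for h in H, and
   Frattini-resistance gives h in K.  Conversely, if x^p is in Phi(H), then
   Phi(C) <= closure <x^p> <= Phi(H), as Phi(H) is closed, so the hypothesis
   applied to C and H gives x in H. *)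

Set Implicit Arguments.
Unset Strict Implicit.
Unset Printing Implicit Defensive.
Local Open Scope classical_set_scope.

Section GroupLaw.
Variables (T : Type) (L : group_law T).
Local Infix "⋅" := (gmul L) (at level 40, left associativity).
Local Notation "x ^-1" := (ginv L x).
Local Notation e := (gone L).

Lemma gmulKg x y : x^-1 ⋅ (x ⋅ y) = y.
Proof. by rewrite (gmulA L) (gmulV L) (gmul1 L). Qed.

Lemma gmulgV x : x ⋅ x^-1 = e.
Proof.
rewrite -[x ⋅ _](gmulKg (x^-1)) (gmulA L (x^-1)) (gmulV L) (gmul1 L).
exact: gmulV.
Qed.

Lemma gmulg1 x : x ⋅ e = x.
Proof. by rewrite -(gmulV L x) (gmulA L) gmulgV (gmul1 L). Qed.

Lemma gmulKVg x y : x ⋅ (x^-1 ⋅ y) = y.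
Proof. by rewrite (gmulA L) gmulgV (gmul1 L). Qed.

Lemma gmulgK x y : y ⋅ x ⋅ x^-1 = y.
Proof. by rewrite -(gmulA L) gmulgV gmulg1. Qed.

Lemma gmulgKV x y : y ⋅ x^-1 ⋅ x = y.
Proof. by rewrite -(gmulA L) (gmulV L) gmulg1. Qed.

Lemma gmulgI x : injective (gmul L x).
Proof. by move=> y z yz; rewrite -(gmulKg x y) yz gmulKg. Qed.

Lemma gmulIg x : injective (gmul L ^~ x).
Proof. by move=> y z /= yz; rewrite -(gmulgK x y) yz gmulgK. Qed.

Lemma ginvK x : (x^-1)^-1 = x.
Proof. by apply: (@gmulIg (x^-1)); rewrite /= (gmulV L) gmulgV. Qed.

Lemma ginvM x y : (x ⋅ y)^-1 = y^-1 ⋅ x^-1.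
Proof. by apply: (@gmulgI (x ⋅ y)); rewrite gmulgV -(gmulA L) gmulKVg gmulgV. Qed.

Lemma ginv1 : e^-1 = e.
Proof. by rewrite -[e^-1]gmulg1 (gmulV L). Qed.

End GroupLaw.

Lemma clopenI_open_cover (T : topologicalType) (C U V : set T) :
  clopen C -> open U -> open V -> C `<=` U `|` V -> U `&` V = set0 ->
  clopen (C `&` U).
Proof.
move=> [oC cC] oU oV CUV UV0; split; first exact: openI.
suff -> : C `&` U = C `&` ~` V by apply: closedI => //; exact: open_closedC.
apply/seteqP; split=> y [Cy UVy]; split => //.
  by move=> Vy; have : (U `&` V) y by []; rewrite UV0.
by case: (CUV y Cy).
Qed.

Section QuasiComponent.
Variable T : topologicalType.
Hypotheses (T_compact : compact [set: T]) (T_hausdorff : hausdorff_space T).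

Lemma closed_separation (A B : set T) : closed A -> closed B -> A `&` B = set0 ->
  exists U V, [/\ open U, open V, A `<=` U, B `<=` V & U `&` V = set0].
Proof.
move=> cA cB AB0.
have nA : set_nbhs A (~` B).
  apply/set_nbhsP; exists (~` B); split => //; first exact: closed_openC.
  by move=> a Aa Ba; have : (A `&` B) a by []; rewrite AB0.
have [W /set_nbhsP [U [oU AU UW]] clWB] := compact_normal T_hausdorff T_compact cA nA.
exists U, (~` closure W); split => //.
- exact/closed_openC/closed_closure.
- by move=> b Bb /clWB.
- by apply/seteqP; split => // y [Uy]; apply; apply/subset_closure/UW.
Qed.

Definition quasi_component (x : T) := [set z | forall C, clopen C -> C x -> C z].

Lemma quasi_component_closed x : closed (quasi_component x).
Proof.
move=> z clz C cC Cx; apply: contrapT => NCz.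
have : nbhs z (~` C) by apply: open_nbhs_nbhs; split => //; exact: closed_openC cC.2.
by move=> /clz [q [Qq NCq]]; exact: NCq (Qq C cC Cx).
Qed.

(* The sets C `&` ~` U, for C a clopen neighbourhood of x, form a filter base;
   if all were nonempty, a cluster point in the compact set ~` U would lie in
   the quasi-component of x. *)
Lemma quasi_component_clopen_sub x (U : set T) :
  open U -> quasi_component x `<=` U -> exists C, [/\ clopen C, C x & C `<=` U].
Proof.
move=> oU QU; apply: contrapT => NsubU.
pose F := filter_from [set C | clopen C /\ C x] (fun C => C `&` ~` U).
have F_filter : ProperFilter F.
  apply: filter_from_proper; last first.
    move=> C [cC Cx]; apply/set0P/eqP => CU0; apply: NsubU; exists C; split => //.
    by move=> y Cy; apply: contrapT => NUy; have : (C `&` ~` U) y by []; rewrite CU0.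
  apply: filter_from_filter; first by exists setT; split => //; exact: clopenT.
  move=> A B [cA Ax] [cB Bx]; exists (A `&` B); first by split; [exact: clopenI|].
  by move=> y [[Ay By] NUy].
have cNU : compact (~` U).
  by apply: (subclosed_compact _ T_compact) => //; exact: open_closedC.
have [|z [NUz clz]] := cNU F F_filter.
  by exists setT; [split => //; exact: clopenT|move=> y []].
have [C [cC Cx NCz]] : exists C, [/\ clopen C, C x & ~ C z].
  apply: contrapT => NC; apply/NUz/QU => C cC Cx.
  by apply: contrapT => NCz; apply: NC; exists C.
have nNC : nbhs z (~` C).
  by apply: open_nbhs_nbhs; split => //; case: cC => _; exact: closed_openC.
have FC : F (C `&` ~` U) by exists C.
by have [y [[Cy _] NCy]] := clz _ _ FC nNC.
Qed.

Lemma quasi_component_sub x (A1 A2 : set T) : closed A1 -> closed A2 ->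
  A1 `&` A2 = set0 -> quasi_component x `<=` A1 `|` A2 -> A1 x ->
  quasi_component x `<=` A1.
Proof.
move=> cA1 cA2 A12 QA A1x.
have [U1 [U2 [oU1 oU2 AU1 AU2 U12]]] := closed_separation cA1 cA2 A12.
have [C [cC Cx CU]] : exists C, [/\ clopen C, C x & C `<=` U1 `|` U2].
  apply: quasi_component_clopen_sub; first exact: openU.
  by move=> z /QA [/AU1|/AU2]; [left|right].
have cCU1 : clopen (C `&` U1) by exact: clopenI_open_cover cC oU1 oU2 CU U12.
move=> z Qz; have [//|A2z] := QA z Qz.
have [_ U1z] : (C `&` U1) z by apply: Qz cCU1 _; split => //; exact: AU1.
suff : (U1 `&` U2) z by rewrite U12.
by split => //; exact: AU2.
Qed.

Lemma quasi_component_connected x : connected (quasi_component x).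
Proof.
move=> B [b Bb] [U oU BQU] [D cD BQD].
have cB : closed B by rewrite BQD; apply: closedI => //; exact: quasi_component_closed.
have cQU : closed (quasi_component x `&` ~` U).
  by apply: closedI; [exact: quasi_component_closed|exact: open_closedC].
have BQU0 : B `&` (quasi_component x `&` ~` U) = set0.
  by apply/seteqP; split => // y [+ [_ NUy]]; rewrite BQU => -[].
have QBQU : quasi_component x `<=` B `|` (quasi_component x `&` ~` U).
  by move=> y Qy; have [Uy|NUy] := pselect (U y); [left; rewrite BQU|right].
have [Ux|NUx] := pselect (U x).
  apply/seteqP; split; first by rewrite BQU => y [].
  apply: (quasi_component_sub cB cQU BQU0 QBQU).
  by rewrite BQU; split => //; move=> C.
rewrite setIC in BQU0; rewrite setUC in QBQU.
have QNU : quasi_component x `<=` ~` U.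
  apply: subset_trans (quasi_component_sub cQU cB BQU0 QBQU _) _ => [|z []//].
  by split => //; move=> C.
by move: Bb; rewrite BQU => -[/QNU].
Qed.

Hypothesis T_td : totally_disconnected [set: T].

Lemma quasi_componentE x : quasi_component x = [set x].
Proof.
apply/seteqP; split => [z Qz|_ ->]; last by [].
rewrite -(T_td (x := x)) //.
by exists (quasi_component x) => //; split => //; exact: quasi_component_connected.
Qed.

Lemma clopen_nbhs_sub x (U : set T) :
  open U -> U x -> exists C, [/\ clopen C, C x & C `<=` U].
Proof.
move=> oU Ux; apply: quasi_component_clopen_sub => //.
by rewrite quasi_componentE => _ ->.
Qed.

End QuasiComponent.

Section TopologicalGroupLaw.
Variables (T : topologicalType) (L : group_law T).
Local Infix "⋅" := (gmul L) (at level 40, left associativity).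
Local Notation "x ^-1" := (ginv L x).
Local Notation e := (gone L).
Local Notation "x ^+ n" := (gpow L x n).

Lemma gpowD x m n : x ^+ (m + n) = x ^+ m ⋅ x ^+ n.
Proof. by elim: m => [|m IHm] /=; rewrite ?(gmul1 L) // IHm (gmulA L). Qed.

Lemma gpowM x m n : x ^+ (m * n) = (x ^+ m) ^+ n.
Proof. by elim: n => [|n IHn]; rewrite ?muln0 // mulnS gpowD IHn. Qed.

Lemma gpow1 x : x ^+ 1 = x.
Proof. exact: gmulg1. Qed.

Section Subgroup.
Variable H : set T.
Hypothesis sH : is_subgroup L H.

Lemma subgroup1 : H e.
Proof. by case: sH. Qed.

Lemma subgroupM x y : H x -> H y -> H (x ⋅ y).
Proof. by case: sH => _ [HM _]; apply: HM. Qed.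

Lemma subgroupV x : H x -> H (x^-1).
Proof. by case: sH => _ [_ HV]; apply: HV. Qed.

Lemma subgroupVM x y : H x -> H y -> H (x^-1 ⋅ y).
Proof. by move=> Hx Hy; apply: subgroupM => //; apply: subgroupV. Qed.

Lemma subgroupMV x y : H x -> H y -> H (x ⋅ y^-1).
Proof. by move=> Hx Hy; apply: subgroupM => //; apply: subgroupV. Qed.

Lemma subgroupX x n : H x -> H (x ^+ n).
Proof. by move=> Hx; elim: n => [|n IHn] /=; [exact: subgroup1|exact: subgroupM]. Qed.

Lemma subgroupVMK x y : H (x^-1 ⋅ y) -> H y -> H x.
Proof.
move=> Hxy Hy; rewrite -[x](gmulKVg L y) -[y^-1 ⋅ x](ginvK L) (ginvM L) (ginvK L).
exact: subgroupMV.
Qed.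

End Subgroup.

Lemma gen_subgroupP S : is_subgroup L (gen_subgroup L S).
Proof.
split; first by move=> H sH _; apply: subgroup1.
split; first by move=> x y Sx Sy H sH SH; apply: (subgroupM sH); [apply: Sx|apply: Sy].
by move=> x Sx H sH SH; apply: (subgroupV sH); apply: Sx.
Qed.

Lemma sub_gen_subgroup S : S `<=` gen_subgroup L S.
Proof. by move=> x Sx H _; apply. Qed.

Lemma gen_subgroup_min S H : is_subgroup L H -> S `<=` H -> gen_subgroup L S `<=` H.
Proof. by move=> sH SH x; apply. Qed.

Section CosetAction.
Variables (N : set T) (k : nat) (s : seq T).
Hypothesis N_normal : normal_subgroup L N.
Hypothesis s_cover : forall x, exists2 i, (i < k)%N & N ((nth e s i)^-1 ⋅ x).
Hypothesis s_uniq : forall i j, (i < k)%N -> (j < k)%N ->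
  N ((nth e s i)^-1 ⋅ nth e s j) -> i = j.

Let sN : is_subgroup L N := N_normal.1.

Lemma same_coset_sym a b : N (a^-1 ⋅ b) -> N (b^-1 ⋅ a).
Proof. by move=> /(subgroupV sN); rewrite (ginvM L) (ginvK L). Qed.

Lemma same_coset_trans a b c : N (a^-1 ⋅ b) -> N (b^-1 ⋅ c) -> N (a^-1 ⋅ c).
Proof. by move=> Nab /(subgroupM sN Nab); rewrite -(gmulA L) (gmulKVg L). Qed.

Definition crep (i : 'I_k) := nth e s i.

Lemma crep_cover x : exists i : 'I_k, N ((crep i)^-1 ⋅ x).
Proof. by have [i ik Nix] := s_cover x; exists (Ordinal ik). Qed.

Definition cindex x : 'I_k := proj1_sig (cid (crep_cover x)).

Lemma cindexP x : N ((crep (cindex x))^-1 ⋅ x).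
Proof. exact: proj2_sig (cid (crep_cover x)). Qed.

Lemma cindex_crep i x : N ((crep i)^-1 ⋅ x) -> cindex x = i.
Proof.
move=> Nix; apply/val_inj/s_uniq; rewrite ?ltn_ord //.
exact: same_coset_trans (cindexP x) (same_coset_sym Nix).
Qed.

Lemma cindex_coset x y : N (x^-1 ⋅ y) -> cindex x = cindex y.
Proof. by move=> Nxy; apply/esym/cindex_crep/(same_coset_trans (cindexP x) Nxy). Qed.

Lemma cindex_lmul_inj g : injective (fun i => cindex (g ⋅ crep i)).
Proof.
move=> i j /= gij; apply/val_inj/s_uniq; rewrite ?ltn_ord //.
have := cindexP (g ⋅ crep i); rewrite gij => /same_coset_sym.
move=> /same_coset_trans /(_ (cindexP (g ⋅ crep j))).
by rewrite (ginvM L) -(gmulA L) (gmulKg L).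
Qed.

(* The quotient by N is not a finGroupType: we work instead with the image of
   the group in the permutations of the left cosets of N, indexed by 'I_k. *)
Definition cperm g : {perm 'I_k} := perm (@cindex_lmul_inj g).

Lemma cpermE g i : cperm g i = cindex (g ⋅ crep i).
Proof. by rewrite permE. Qed.

Lemma cpermM a b : cperm (a ⋅ b) = (cperm b * cperm a)%g.
Proof.
apply/permP => i; rewrite permM !cpermE; apply: cindex_coset.
rewrite -(gmulA L) (ginvM L a) -(gmulA L) (gmulKg L).
exact/same_coset_sym/cindexP.
Qed.

Lemma cperm_id g : N g -> cperm g = 1%g.
Proof.
by move=> Ng; apply/permP => i; rewrite cpermE perm1; apply/cindex_crep/N_normal.2.
Qed.

Lemma cperm1 : cperm e = 1%g.
Proof. exact/cperm_id/(subgroup1 sN). Qed.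

Lemma cpermV a : cperm (a^-1) = ((cperm a)^-1)%g.
Proof. by apply/eqP; rewrite eq_sym eq_invg_mul -cpermM (gmulV L) cperm1. Qed.

Lemma cpermX h n : cperm (h ^+ n) = (cperm h ^+ n)%g.
Proof. by elim: n => [|n IHn] /=; rewrite ?cperm1 // cpermM IHn expgSr. Qed.

Lemma cperm_ker g : cperm g = 1%g -> N g.
Proof.
move=> g1; pose i := cindex e.
have Ni : N (crep i).
  by have := cindexP e; rewrite (gmulg1 L) => /(subgroupV sN); rewrite (ginvK L).
have := cindexP (g ⋅ crep i); rewrite -cpermE g1 perm1 => /(N_normal.2 (crep i)^-1).
by rewrite (ginvK L) (gmulA L) (gmulKVg L) (gmulgK L).
Qed.

Lemma cperm_eq a b : cperm a = cperm b -> N (a^-1 ⋅ b).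
Proof. by move=> ab; apply: cperm_ker; rewrite cpermM cpermV ab mulgV. Qed.

Lemma cperm_coset a b : N (a^-1 ⋅ b) -> cperm a = cperm b.
Proof. by move=> Nab; rewrite -[b](gmulKVg L a) cpermM (cperm_id Nab) mul1g. Qed.

Definition cimg (X : set T) : {set {perm 'I_k}} :=
  [set σ | `[< exists g, X g /\ cperm g = σ >]].

Lemma cimgP X σ : reflect (exists g, X g /\ cperm g = σ) (σ \in cimg X).
Proof. by rewrite inE; apply: asboolP. Qed.

Lemma mem_cimg X g : X g -> cperm g \in cimg X.
Proof. by move=> Xg; apply/cimgP; exists g. Qed.

Lemma cimg_group X : is_subgroup L X -> group_set (cimg X).
Proof.
move=> sX; apply/group_setP; split.
  by rewrite -cperm1; apply: mem_cimg; exact: subgroup1.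
move=> _ _ /cimgP [a [Xa <-]] /cimgP [b [Xb <-]].
by rewrite -cpermM; apply: mem_cimg; exact: subgroupM.
Qed.

Lemma cimgS X Y : X `<=` Y -> cimg X \subset cimg Y.
Proof.
by move=> XY; apply/fintype.subsetP => _ /cimgP [g [Xg <-]]; apply: mem_cimg; exact: XY.
Qed.

Lemma card_cimgT : #|cimg setT| = k.
Proof.
have -> : cimg setT = [set cperm (crep i) | i : 'I_k].
  apply/setP => σ; apply/cimgP/imsetP => [[g [_ <-]]|[i _ ->]].
    by exists (cindex g) => //; apply/cperm_coset/same_coset_sym/cindexP.
  by exists (crep i).
rewrite card_imset ?card_ord // => i j /cperm_eq Nij.
by apply/val_inj/s_uniq; rewrite ?ltn_ord.
Qed.

Variables (p : nat) (H M : set T).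
Hypothesis k_pnat : p.-nat k.
Hypotheses (sH : is_subgroup L H) (sM : is_subgroup L M) (MH : M `<=` H).
Hypotheses (MneH : M <> H) (NHM : N `&` H `<=` M).
Hypothesis M_maximal : forall K, is_subgroup L K -> M `<=` K -> K `<=` H ->
  K = M \/ K = H.

Lemma cperm_lift g y : M g -> H y -> cperm g = cperm y -> M y.
Proof.
move=> Mg Hy /cperm_eq Ngy; rewrite -[y](gmulKVg L g); apply: (subgroupM sM) => //.
by apply: NHM; split => //; apply: (subgroupVM sH) => //; exact: MH.
Qed.

Let Hbar := Group (cimg_group sH).
Let Mbar := Group (cimg_group sM).

(* A subgroup between Mbar and Hbar pulls back to a subgroup between M and H. *)
Lemma cimg_maximal : maximal Mbar Hbar.
Proof.
apply/maxgroupP; split.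
  rewrite properE cimgS //=; apply/negP => HbarM; apply: MneH.
  apply/seteqP; split => // y Hy.
  have /cimgP [g [Mg gy]] := fintype.subsetP HbarM _ (mem_cimg Hy).
  exact: cperm_lift Mg Hy gy.
move=> Kbar /andP [KbarH NHbarK] MKbar.
pose K := [set y | H y /\ cperm y \in Kbar].
have sK : is_subgroup L K.
  split; first by split; [exact: subgroup1|rewrite cperm1 group1].
  split => [a b [Ha Ka] [Hb Kb]|a [Ha Ka]].
    by split; [exact: subgroupM|rewrite cpermM groupM].
  by split; [exact: subgroupV|rewrite cpermV groupV].
have MK : M `<=` K.
  by move=> y My; split; [exact: MH|apply: (fintype.subsetP MKbar); exact: mem_cimg].
have [KM|KH] := M_maximal sK MK (fun y (Ky : K y) => Ky.1).
  apply/eqP; rewrite finset.eqEsubset MKbar andbT; apply/fintype.subsetP => σ Kσ.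
  have /cimgP [g [Hg gσ]] := fintype.subsetP KbarH _ Kσ.
  by apply/cimgP; exists g; split => //; rewrite -KM; split => //; rewrite gσ.
case/negP: NHbarK; apply/fintype.subsetP => _ /cimgP [g [Hg <-]].
by have [] : K g by rewrite KH.
Qed.

(* p-th powers lie in the Frattini subgroup of the finite p-group Hbar. *)
Lemma maximal_subgroup_gpow h : H h -> M (h ^+ p).
Proof.
move=> Hh; have Hbar_p : pgroup p Hbar.
  have sT : is_subgroup L [set: T] by [].
  apply: (@pgroupS _ _ (Group (cimg_group sT))); first exact: cimgS.
  by rewrite /pgroup card_cimgT.
have : (cperm h ^+ p)%g \in Mbar.
  apply: (fintype.subsetP (Phi_sub_max cimg_maximal)).
  rewrite (Phi_joing Hbar_p); apply: (fintype.subsetP (joing_subr _ _)).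
  have := Mho_p_elt 1 (mem_cimg Hh) (mem_p_elt Hbar_p (mem_cimg Hh)).
  by rewrite expn1.
rewrite -cpermX => /cimgP [g [Mg gh]].
by apply: cperm_lift Mg _ gh; exact: subgroupX.
Qed.

End CosetAction.

Section TopologicalGroup.
Hypothesis TG : topological_group L.

Lemma gmul_nbhs a b (B : set T) : nbhs (a ⋅ b) B ->
  exists P Q, [/\ nbhs a P, nbhs b Q & forall x y, P x -> Q y -> B (x ⋅ y)].
Proof.
move=> /(TG.1 (a, b)) [[P Q]] /= [Pa Qb] PQB.
by exists P, Q; split => // x y Px Qy; apply: (PQB (x, y)).
Qed.

Lemma continuous_lmul g : continuous (gmul L g).
Proof.
move=> y B nB; have [P [Q [/nbhs_singleton Pg Qy PQB]]] := gmul_nbhs nB.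
by apply: filterS Qy => z; apply: PQB.
Qed.

Lemma open_lmul_preimage g U : open U -> open [set y | U (g ⋅ y)].
Proof. exact: (continuousP _).1 (@continuous_lmul g) U. Qed.

Lemma closed_lmul_preimage g U : closed U -> closed [set y | U (g ⋅ y)].
Proof. exact: (continuous_closedP _).1 (@continuous_lmul g) U. Qed.

Lemma subgroup_closure S : is_subgroup L S -> is_subgroup L (closure S).
Proof.
move=> sS; split; first by apply/subset_closure; exact: subgroup1.
split.
  move=> a b Sa Sb B /gmul_nbhs [P [Q [Pa Qb PQB]]].
  have [x [Sx Px]] := Sa P Pa; have [y [Sy Qy]] := Sb Q Qb.
  by exists (x ⋅ y); split; [apply: subgroupM|apply: PQB].
move=> a Sa B /TG.2 /Sa [x [Sx Bx]].
by exists (x^-1); split => //; apply: subgroupV.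
Qed.

Lemma open_subgroup S : is_subgroup L S -> nbhs e S -> open S.
Proof.
move=> sS nS; rewrite openE => s Ss; rewrite /interior /=.
have sS1 : gmul L (s^-1) @ s --> e by rewrite -(gmulV L s); exact: continuous_lmul.
apply: (@filterS _ _ _ (gmul L (s^-1) @^-1` S)); last exact: sS1 S nS.
by move=> y Sy; rewrite -(gmulKVg L s y); apply: subgroupM.
Qed.

(* H minus M is the union of the open-in-H sets h U `&` H over h in H minus M. *)
Lemma closed_open_in_subgroup H M U : closed H -> is_subgroup L H ->
  is_subgroup L M -> M `<=` H -> open U -> M = U `&` H -> closed M.
Proof.
move=> cH sH sM MH oU MUH.
pose V := [set y | exists h, [/\ H h, ~ M h & U (h^-1 ⋅ y)]].
have oV : open V.
  rewrite openE => y [h [Hh NMh Uy]].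
  apply: (@filterS _ _ _ [set z | U (h^-1 ⋅ z)]); first by move=> z Uz; exists h.
  by apply: open_nbhs_nbhs; split => //; apply: open_lmul_preimage.
suff -> : M = H `&` ~` V by apply: closedI => //; apply: open_closedC.
apply/seteqP; split => [y My|y [Hy NVy]].
  split; first exact: MH.
  move=> [h [Hh NMh Uhy]]; apply: NMh.
  have Mhy : M (h^-1 ⋅ y).
    by rewrite MUH; split => //; apply: (subgroupVM sH Hh); exact: MH.
  exact: (subgroupVMK sM Mhy).
apply: contrapT => NMy; apply: NVy; exists y; split => //.
by rewrite (gmulV L); have := subgroup1 sM; rewrite MUH => -[].
Qed.

Definition gcycle x := gen_subgroup L [set y | y \in [:: x]].

Definition ccycle x := closure (gcycle x).

Lemma gcycle_min x K : is_subgroup L K -> K x -> gcycle x `<=` K.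
Proof. by move=> sK Kx; apply: gen_subgroup_min => // y; rewrite /= inE => /eqP ->. Qed.

Lemma ccycle_subgroup x : is_subgroup L (ccycle x).
Proof. exact/subgroup_closure/gen_subgroupP. Qed.

Lemma ccycle_id x : ccycle x x.
Proof. by apply: subset_closure; apply: sub_gen_subgroup; rewrite /= mem_head. Qed.

Lemma ccycle_min x K : closed K -> is_subgroup L K -> K x -> ccycle x `<=` K.
Proof.
move=> cK sK Kx; rewrite /ccycle closureE.
by apply: smallest_sub => //; apply: gcycle_min.
Qed.

Lemma ccycle_fg x : fg_subgroup L (ccycle x).
Proof.
by split; [split; [exact: ccycle_subgroup|exact: closed_closure]|exists [:: x]].
Qed.

Definition int_gpows x := [set y | exists m n, y = x ^+ m ⋅ (x ^+ n)^-1].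

Lemma gpowV_gpow x m n : (x ^+ m)^-1 ⋅ x ^+ n = x ^+ (n - m) ⋅ (x ^+ (m - n))^-1.
Proof.
have [mn|nm] := leqP m n.
  rewrite (eqP mn : m - n = 0)%N /= (ginv1 L) (gmulg1 L) -{1}(subnKC mn) gpowD.
  exact: gmulKg.
rewrite (eqP (ltnW nm) : n - m = 0)%N /= (gmul1 L) -{1}(subnKC (ltnW nm)).
by rewrite gpowD (ginvM L) (gmulgKV L).
Qed.

Lemma int_gpows_subgroup x : is_subgroup L (int_gpows x).
Proof.
split; first by exists 0%N, 0%N; rewrite /= (ginv1 L) (gmul1 L).
split.
  move=> _ _ [a [b ->]] [c [d ->]]; exists (a + (c - b))%N, (d + (b - c))%N.
  rewrite -(gmulA L) (gmulA L (_^-1)) gpowV_gpow -!(gmulA L) -(ginvM L).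
  by rewrite (gmulA L) -!gpowD.
by move=> _ [m [n ->]]; exists n, m; rewrite (ginvM L) (ginvK L).
Qed.

Lemma gcycle_sub_int_gpows x : gcycle x `<=` int_gpows x.
Proof.
apply: gcycle_min; first exact: int_gpows_subgroup.
by exists 1%N, 0%N; rewrite gpow1 /= (ginv1 L) (gmulg1 L).
Qed.

Definition gcoset g (H : set T) := [set y | H (g^-1 ⋅ y)].

Lemma gcoset_closed g H : closed H -> closed (gcoset g H).
Proof. exact: closed_lmul_preimage. Qed.

Lemma gcoset1 H : gcoset e H = H.
Proof. by apply/seteqP; split => y; rewrite /gcoset /= (ginv1 L) (gmul1 L). Qed.

Section ClosedCycle.
Variables (p : nat) (x : T).
Hypothesis p_prime : prime p.
Local Notation A := (ccycle x).
Local Notation C := (ccycle (x ^+ p)).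

Lemma subgroup_gpow_prime K i : is_subgroup L K -> (0 < i < p)%N ->
  K (x ^+ p) -> K (x ^+ i) -> K x.
Proof.
move=> sK /andP[i_gt0 ip] Kp Ki; have [u v def1 _] := egcdnP p i_gt0.
have /eqP cop : coprime i p by rewrite coprime_sym prime_coprime // gtnNdvd.
have Kui : K (x ^+ (u * i)) by rewrite mulnC gpowM; apply: subgroupX.
have Kvp : K (x ^+ (v * p)) by rewrite mulnC gpowM; apply: subgroupX.
rewrite def1 cop gpowD gpow1 in Kui.
by rewrite -(gmulKg L (x ^+ (v * p)) x); apply: subgroupVM.
Qed.

Lemma ccycle_gpow_sub : C `<=` A.
Proof.
apply: ccycle_min; [exact: closed_closure|exact: ccycle_subgroup|].
exact/(subgroupX (ccycle_subgroup x))/ccycle_id.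
Qed.

Lemma closed_ccycle_cosets (I : set nat) : I `<=` `I_p ->
  closed (\bigcup_(i in I) gcoset (x ^+ i) C).
Proof.
move=> sIp; apply: closed_bigcup; first exact: sub_finite_set (finite_II p).
by move=> i _; apply: gcoset_closed; exact: closed_closure.
Qed.

(* x^m (x^n)^-1 = x^(N %% p) (x^p)^(N %/ p) ((x^p)^n)^-1 with N = m + (p-1) n. *)
Lemma ccycle_cosets : A `<=` \bigcup_(i in `I_p) gcoset (x ^+ i) C.
Proof.
rewrite /ccycle [X in X `<=` _]closureE; apply: smallest_sub.
  exact: closed_ccycle_cosets.
move=> _ /gcycle_sub_int_gpows [m [n ->]].
pose N := (m + (p - 1) * n)%N.
have -> : x ^+ m ⋅ (x ^+ n)^-1 = x ^+ N ⋅ ((x ^+ p) ^+ n)^-1.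
  rewrite -gpowM gpowD -(gmulA L); congr (_ ⋅ _).
  have -> : (p * n = n + (p - 1) * n)%N.
    by rewrite mulnBl mul1n subnKC // leq_pmull // prime_gt0.
  by rewrite gpowD (ginvM L) gmulKVg.
have -> : x ^+ N = x ^+ (N %% p) ⋅ (x ^+ p) ^+ (N %/ p).
  by rewrite {1}(divn_eq N p) addnC gpowD mulnC gpowM.
exists (N %% p)%N; first by rewrite /= ltn_mod prime_gt0.
rewrite /gcoset /= -(gmulA L) gmulKg.
have sC := ccycle_subgroup (x ^+ p).
by apply: (subgroupMV sC); apply: (subgroupX sC); exact: ccycle_id.
Qed.

Lemma ccycle_gpow_open_in : ~ C x ->
  C = ~` (\bigcup_(i in [set i | 0 < i < p]%N) gcoset (x ^+ i) C) `&` A.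
Proof.
have sC := ccycle_subgroup (x ^+ p).
move=> NCx; apply/seteqP; split => [c Cc|c [NDc Ac]].
  split; last exact: ccycle_gpow_sub.
  move=> [i ip Cic]; apply: NCx; apply: (subgroup_gpow_prime sC ip).
    exact: ccycle_id.
  exact: (subgroupVMK sC Cic).
have [i /= ip Cic] := ccycle_cosets Ac.
have [i0|i_gt0] := posnP i; last by exfalso; apply: NDc; exists i => //=; rewrite i_gt0.
by move: Cic; rewrite i0 gcoset1.
Qed.

Lemma ccycle_gpow_maximal : ~ C x -> maximal_open_subgroup L A C.
Proof.
move=> NCx; split.
- exact: ccycle_subgroup.
- exact: ccycle_gpow_sub.
- by move=> CA; apply: NCx; rewrite CA; exact: ccycle_id.
- exists (~` \bigcup_(i in [set i | 0 < i < p]%N) gcoset (x ^+ i) C).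
  split; last exact: ccycle_gpow_open_in.
  by apply/closed_openC/closed_ccycle_cosets => i /andP[].
move=> K sK CK AK; have [KC|] := pselect (K `<=` C); first by left; apply/seteqP.
move=> /existsNP [z /not_implyP [Kz NCz]]; right; apply/seteqP; split => // a Aa.
have [i /= ip Ciz] := ccycle_cosets (AK _ Kz).
have i_gt0 : (0 < i)%N.
  by rewrite lt0n; apply: contra_notN NCz => /eqP i0; move: Ciz; rewrite i0 gcoset1.
have Kxi : K (x ^+ i) := subgroupVMK sK (CK _ Ciz) Kz.
have Kx : K x.
  apply: (subgroup_gpow_prime sK (i := i)) => //; first by rewrite i_gt0.
  exact/CK/ccycle_id.
have [j _ Cja] := ccycle_cosets Aa.
rewrite -(gmulKVg L (x ^+ j) a); apply: (subgroupM sK); first exact: subgroupX.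
exact: CK.
Qed.

Lemma Frattini_ccycle_sub : Frattini L A `<=` C.
Proof.
have [Cx|NCx] := pselect (C x); last by move=> y [_]; apply; exact: ccycle_gpow_maximal.
move=> y [Ay _]; move: Ay; apply: ccycle_min => //; first exact: closed_closure.
exact: ccycle_subgroup.
Qed.

End ClosedCycle.

Lemma ccycle_sub_Frattini H y : closed_subgroup L H -> Frattini L H y ->
  ccycle y `<=` Frattini L H.
Proof.
move=> [sH cH] [Hy FHy] z Cz; split; first by move: Cz; apply: ccycle_min.
move=> M maxM; have [sM MH _ [U [oU MUH]] _] := maxM.
move: Cz; apply: ccycle_min => //; last exact: FHy.
exact: (closed_open_in_subgroup cH sH sM MH oU MUH).
Qed.

Section CompactGroup.
Hypothesis T_compact : compact [set: T].

(* By compactness of V, V i `<=` V for all i near 1; the stabiliser S of V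
   under right multiplication is then a neighbourhood of 1. *)
Lemma open_subgroup_sub_clopen (V : set T) : clopen V -> V e ->
  exists S, [/\ is_subgroup L S, open S & S `<=` V].
Proof.
move=> [oV cV] Ve.
have cpV : compact V by apply: subclosed_compact cV T_compact _.
have nVi : \forall i \near e, forall v, V v -> V (v ⋅ i).
  apply: ((compact_near_coveringP V).1 cpV T (nbhs e) (fun i v => V (v ⋅ i))).
  move=> v Vv; have : nbhs (v ⋅ e) V by rewrite (gmulg1 L); apply: open_nbhs_nbhs.
  move=> /gmul_nbhs [P [Q [Pv Qe PQV]]].
  by exists (P, Q) => //= -[a b] /= [Pa Qb]; apply: PQV.
pose S := [set g | forall v, V v -> V (v ⋅ g) /\ V (v ⋅ g^-1)].
have sS : is_subgroup L S.
  split; first by move=> v Vv; rewrite (ginv1 L) (gmulg1 L).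
  split => [a b Sa Sb v Vv|a Sa v Vv].
    rewrite (gmulA L) (ginvM L) (gmulA L).
    by split; [apply: (Sb _ (Sa _ Vv).1).1|apply: (Sa _ (Sb _ Vv).2).2].
  by rewrite (ginvK L); split; [apply: (Sa _ Vv).2|apply: (Sa _ Vv).1].
have nS : nbhs e S.
  have nVVi : nbhs e (ginv L @^-1` [set i | forall v, V v -> V (v ⋅ i)]).
    by apply: TG.2; rewrite (ginv1 L).
  apply: filterS (filterI nVi nVVi) => g [Vg VVg] v Vv.
  by split; [apply: Vg|apply: VVg].
exists S; split => //; first exact: open_subgroup.
by move=> g /(_ e Ve) [+ _]; rewrite (gmul1 L).
Qed.

(* The core of W: by compactness of T, t^-1 y t lies in W uniformly in t for
   y near 1. *)
Lemma open_normal_subgroup_sub (W : set T) : is_subgroup L W -> open W ->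
  exists N, [/\ normal_subgroup L N, open N & N `<=` W].
Proof.
move=> sW oW; pose N := [set y | forall t, W (t^-1 ⋅ (y ⋅ t))].
have sN : is_subgroup L N.
  split; first by move=> t; rewrite (gmul1 L) (gmulV L); exact: subgroup1.
  split => [a b Na Nb t|a Na t].
    have -> : t^-1 ⋅ (a ⋅ b ⋅ t) = t^-1 ⋅ (a ⋅ t) ⋅ (t^-1 ⋅ (b ⋅ t)).
      by rewrite !(gmulA L) (gmulgK L).
    exact: subgroupM.
  have -> : t^-1 ⋅ (a^-1 ⋅ t) = (t^-1 ⋅ (a ⋅ t))^-1.
    by rewrite !(ginvM L) (ginvK L) (gmulA L).
  exact: subgroupV.
have nN : nbhs e N.
  have : \forall y \near e, forall t, [set: T] t -> W (t^-1 ⋅ (y ⋅ t)).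
    apply: ((compact_near_coveringP _).1 T_compact T (nbhs e)
      (fun y t => W (t^-1 ⋅ (y ⋅ t)))) => t _.
    have : nbhs (t^-1 ⋅ (e ⋅ t)) W.
      rewrite (gmul1 L) (gmulV L); apply: open_nbhs_nbhs; split => //.
      exact: subgroup1.
    move=> /gmul_nbhs [P1 [Q1 [P1t Q1t PQ1]]].
    have [P2 [Q2 [P2e Q2t PQ2]]] := gmul_nbhs Q1t.
    have nP1 : nbhs t (ginv L @^-1` P1) by exact: TG.2.
    exists (Q2 `&` ginv L @^-1` P1, P2); first by split => //=; apply: filterI.
    by move=> [a b] /= [[Q2a P1a] P2b]; apply: PQ1 => //; apply: PQ2.
  by apply: filterS => y Ny t; exact: Ny.
exists N; split.
- split => // x y Ny t.
  have -> : t^-1 ⋅ (x^-1 ⋅ (y ⋅ x) ⋅ t) = (x ⋅ t)^-1 ⋅ (y ⋅ (x ⋅ t)).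
    by rewrite (ginvM L) !(gmulA L).
  exact: Ny.
- exact: open_subgroup.
- by move=> y /(_ e); rewrite (ginv1 L) (gmul1 L) (gmulg1 L).
Qed.

Hypotheses (T_hausdorff : hausdorff_space T) (T_td : totally_disconnected [set: T]).

Lemma open_normal_subgroup_sub_nbhs U : open U -> U e ->
  exists N, [/\ normal_subgroup L N, open N & N `<=` U].
Proof.
move=> oU U1; have [C [cC C1 CU]] := clopen_nbhs_sub T_compact T_hausdorff T_td oU U1.
have [S [sS oS SC]] := open_subgroup_sub_clopen cC C1.
have [N [nN oN NS]] := open_normal_subgroup_sub sS oS.
by exists N; split => // y /NS /SC /CU.
Qed.

End CompactGroup.

End TopologicalGroup.

End TopologicalGroupLaw.

Lemma Frattini_gpow (p : nat) (T : topologicalType) (L : group_law T) (H : set T) h :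
  prime p -> pro_p_group L p -> closed_subgroup L H -> H h ->
  Frattini L H (gpow L h p).
Proof.
move=> p_prime [TG T_compact T_hausdorff T_td quot] [sH _] Hh.
split=> [|M [sM MH MneH [U [oU MUH]] M_maximal]]; first exact: subgroupX.
have U1 : U (gone L) by have := subgroup1 sM; rewrite MUH => -[].
have [N [nN oN NU]] :=
  open_normal_subgroup_sub_nbhs TG T_compact T_hausdorff T_td oU U1.
have [n [s [_ [s_cover s_uniq]]]] := quot N nN oN.
apply: (maximal_subgroup_gpow nN s_cover s_uniq _ sH sM MH MneH _ M_maximal Hh).
  by rewrite pnatX pnat_id.
by move=> y [Ny Hy]; rewrite MUH; split => //; exact: NU.
Qed.

Theorem mainTheorem18 (p : nat) (T : topologicalType) (L : group_law T) :
  prime p -> pro_p_group L p ->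
  (Frattini_resistant L p <->
   forall H K : set T, fg_subgroup L H -> fg_subgroup L K ->
     Frattini L H `<=` Frattini L K -> H `<=` K).
Proof.
move=> p_prime pG; have [TG _ _ _ _] := pG.
split=> [resistant H K fgH fgK FHK h Hh|Frattini_mono H fgH x Fxp].
  exact: (resistant K fgK h (FHK _ (Frattini_gpow p_prime pG fgH.1 Hh))).
have FC : Frattini L (ccycle L x) `<=` Frattini L H.
  apply: subset_trans (ccycle_sub_Frattini TG fgH.1 Fxp).
  exact: Frattini_ccycle_sub.
by apply: (Frattini_mono _ _ (ccycle_fg TG x) fgH FC); exact: ccycle_id.
Qed.
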